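(* Fix a prompt $x$ and integers $n\ge k\ge 2$. Assume the law of $R(x,y)$ under $y\sim\pi_\theta(\cdot|x)$ has no atoms (so the rewards of independent samples are almost surely pairwise distinct). Let $y^1,\dots,y^n$ be i.i.d. samples from $\pi_\theta(\cdot|x)$, relabeled so that $R(x,y^1)<R(x,y^2)<\dots<R(x,y^n)$. Define $$\hat G=\frac{k}{n}\sum_{i=1}^n\left[R(x,y^i)\frac{\binom{i-1}{k-1}}{\binom{n-1}{k-1}}-\frac{k-1}{n-1}\sum_{j=1}^{i-1}R(x,y^j)\frac{\binom{j-1}{k-2}}{\binom{n-2}{k-2}}\right]\nabla_\theta\log\pi_\theta(y^i\mid x).$$ Then more precisely $$\mathbb{E}\Big[\tfrac1n\sum_{i=1}^n R(x,y^i)\tfrac{\binom{i-1}{k-1}}{\binom{n-1}{k-1}}\nabla_\theta\log\pi_\theta(y^i|x)\Big]=\mathbb{E}_{y}\big[R(x,y)P_{\le,\theta}(y)^{k-1}\nabla_\theta\log\pi_\theta(y|x)\big],$$ $$\mathbb{E}\Big[\tfrac1n\sum_{i=1}^n\tfrac{k-1}{n-1}\sum_{j=1}^{i-1}R(x,y^j)\tfrac{\binom{j-1}{k-2}}{\binom{n-2}{k-2}}\nabla_\theta\log\pi_\theta(y^i|x)\Big]=\mathbb{E}_{y}\big[(k-1)g(y)\nabla_\theta\log\pi_\theta(y|x)\big],$$ and hence $$\mathbb{E}[\hat G]=k\,\mathbb{E}_{y\sim\pi_\theta(\cdot|x)}\Big[\big(R(x,y)P_{\le,\theta}(y)^{k-1}-(k-1)g(y)\big)\nabla_\theta\log\pi_\theta(y\mid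 x)\Big].$$
   Context: $\pi_\theta(\cdot\mid x)$ is a probability distribution on a measurable response space, with density $\pi_\theta(y\mid x)$ with respect to a fixed $\sigma$-finite measure, differentiable in $\theta$; $R(x,y)$ is a bounded real-valued reward, and all expectations involved are assumed finite. For a response $y$, $P_{\le,\theta}(y)=\Pr_{y'\sim\pi_\theta(\cdot|x)}[R(x,y')\le R(x,y)]$, and $g(y)=\mathbb{E}_{y'\sim\pi_\theta(\cdot|x)}\big[R(x,y')\,P_{\le,\theta}(y')^{k-2}\,\mathbf 1\{R(x,y')<R(x,y)\}\big]$. Binomial coefficients use $\binom{p}{q}=0$ for $q>p$ or $q<0$. *)

From HB Require Import structures.
From mathcomp Require Import all_boot all_order all_algebra.
From mathcomp Require Import all_classical all_reals all_analysis.
Set Implicit Arguments. Unset Strict Implicit. Unset Printing Implicit Defensive.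
Import Order.TTheory GRing.Theory Num.Theory.
Import numFieldNormedType.Exports.
Local Open Scope classical_set_scope.
Local Open Scope ring_scope.

Section Defs.
Context {R : realType} {d : measure_display} {Y : measurableType d}.
Variable mu : {measure set Y -> \bar R}.

Definition Ep (p : Y -> R) (f : Y -> R) : R :=
  \int[mu]_(y in setT) (p y * f y).

Definition Ple (p : Y -> R) (rew : Y -> R) (y : Y) : R :=
  Ep p (fun y' => ((rew y' <= rew y)%R)%:R).

Definition gfun (p : Y -> R) (rew : Y -> R) (k : nat) (y : Y) : R :=
  Ep p (fun y' => rew y' * Ple p rew y' ^+ (k - 2) * ((rew y' < rew y)%R)%:R).

(* Expectation of F(y^1,...,y^n) for y^1..y^n i.i.d. with density p
   (iterated integral = integral against the n-fold product law). *)
Fixpoint iidE (p : Y -> R) (n : nat) (F : seq Y -> R) : R :=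
  match n with
  | 0 => F [::]
  | m.+1 => Ep p (fun y => iidE p m (fun s => F (y :: s)))
  end.

End Defs.

Definition score {R : realType} {Y : Type} {m : nat}
  (pi : 'rV[R]_m -> Y -> R) (theta : 'rV[R]_m) (j : 'I_m) (y : Y) : R :=
  'D_(delta_mx 0 j) (fun t => ln (pi t y)) theta.

Section Estimator.
Context {R : realType} {Y : Type}.
Variables (rew : Y -> R) (sc : Y -> R) (n k : nat).

(* number of samples in s with reward strictly below that of y;
   for the sorted relabeling this is  i-1  when y = y^i *)
Definition below (s : seq Y) (y : Y) : nat := count (fun y' => rew y' < rew y) s.

Definition term1 (s : seq Y) : R :=
  n%:R^-1 * \sum_(yi <- s)
     rew yi * ('C(below s yi, k - 1))%:R / ('C(n - 1, k - 1))%:R * sc yi.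

Definition term2 (s : seq Y) : R :=
  n%:R^-1 * \sum_(yi <- s)
     ((k - 1)%:R / (n - 1)%:R *
        \sum_(yj <- s | rew yj < rew yi)
           rew yj * ('C(below s yj, k - 2))%:R / ('C(n - 2, k - 2))%:R) * sc yi.

Definition Ghat (s : seq Y) : R :=
  k%:R / n%:R * \sum_(yi <- s)
     (rew yi * ('C(below s yi, k - 1))%:R / ('C(n - 1, k - 1))%:R
      - (k - 1)%:R / (n - 1)%:R *
        \sum_(yj <- s | rew yj < rew yi)
           rew yj * ('C(below s yj, k - 2))%:R / ('C(n - 2, k - 2))%:R) * sc yi.

End Estimator.

From HB Require Import structures.
From mathcomp Require Import all_boot all_order all_algebra.
From mathcomp Require Import all_classical all_reals all_analysis.
From mathcomp Require Import measurable_realfun ring.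
Import Order.TTheory GRing.Theory Num.Theory.
Import numFieldNormedType.Exports.
Local Open Scope classical_set_scope.
Local Open Scope ring_scope.
Set Implicit Arguments. Unset Strict Implicit.

(* Draw the samples one at a time.  Once a prefix t has been drawn and m
   samples remain, the rank of a sample x among all samples is its rank in t
   plus a Binomial(m, q x) count of later samples below it, where q x is the
   probability that a fresh sample has a smaller reward.  This gives closed
   forms for the conditional expectations of both sums of the estimator,
   checked by induction on m with Fubini's theorem.  For t = [::] and m = n,
   the binomial moments E[C(B, j)] = C(N, j) p^j turn them into the
   right-hand sides; without atoms q coincides with P_<=. *)

Section BinomialExpectation.
Variable R : comPzRingType.

(* [binomialE m p f] is E[f B] for B ~ Binomial(m, p). *)
Fixpoint binomialE (m : nat) (p : R) (f : nat -> R) : R :=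
  match m with
  | 0 => f 0%N
  | m'.+1 => p * binomialE m' p (fun c => f c.+1) + (1 - p) * binomialE m' p f
  end.

Lemma eq_binomialE m p f g : f =1 g -> binomialE m p f = binomialE m p g.
Proof.
elim: m f g => [|m IH] f g fg /=; first exact: fg.
by rewrite (IH _ (fun c => g c.+1)) // (IH f g).
Qed.

Lemma binomialED m p f g :
  binomialE m p (fun c => f c + g c) = binomialE m p f + binomialE m p g.
Proof.
elim: m f g => [|m IH] f g //=.
rewrite (IH (fun c => f c.+1) (fun c => g c.+1)) IH; ring.
Qed.

Lemma binomialEZ m p a f : binomialE m p (fun c => a * f c) = a * binomialE m p f.
Proof.
elim: m f => [|m IH] f //=.
rewrite (IH (fun c => f c.+1)) IH; ring.
Qed.

Lemma binomialE_bin N p j : binomialE N p (fun c => ('C(c, j))%:R) = ('C(N, j))%:R * p ^+ j.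
Proof.
elim: N j => [|N IH] j.
  by case: j => [|j] /=; rewrite ?bin0 ?expr0 ?mulr1 // bin0n mul0r.
case: j => [|j] /=.
  rewrite (@eq_binomialE _ _ (fun c => ('C(c.+1, 0))%:R) (fun c => ('C(c, 0))%:R));
    last by move=> c; rewrite !bin0.
  rewrite IH !bin0 expr0; ring.
rewrite (@eq_binomialE _ _ _ (fun c => ('C(c, j.+1))%:R + ('C(c, j))%:R)); last first.
  by move=> c; rewrite binS natrD.
rewrite binomialED !IH binS natrD exprS; ring.
Qed.

End BinomialExpectation.

Lemma bool_affine (R : pzRingType) (V : nat -> R) (b : bool) :
  V b = V 0%N + (b : nat)%:R * (V 1%N - V 0%N).
Proof. by case: b => /=; rewrite ?mul1r ?mul0r ?addr0 // addrC subrK. Qed.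

Lemma measurable_bool_natr (R : realType) d (T : measurableType d) (b : T -> bool) :
  measurable_fun setT b -> measurable_fun setT (fun z => ((b z : nat)%:R : R)).
Proof.
move=> mb.
have -> : (fun z => ((b z : nat)%:R : R)) = (fun z => if b z then 1 else 0).
  by apply/funext => z; case: (b z).
exact: measurable_fun_ifT.
Qed.

Section Density.
Context {R : realType} {d : measure_display} {Y : measurableType d}.
Variable mu : {measure set Y -> \bar R}.
Hypothesis mu_sigma_finite : sigma_finite setT mu.
Variable P : Y -> R.
Hypothesis P_ge0 : forall y, 0 <= P y.
Hypothesis P_measurable : measurable_fun setT P.
Hypothesis P_total : (\int[mu]_(y in setT) (P y)%:E = 1)%E.

Local Notation E := (Ep mu P).

Definition Pintegrable (f : Y -> R) :=
  measurable_fun setT f /\ mu.-integrable setT (fun y => (P y * f y)%:E).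

Definition bounded_measurable (f : Y -> R) :=
  measurable_fun setT f /\ exists B, forall y, `|f y| <= B.

Lemma integrable_density : mu.-integrable setT (fun y => (P y)%:E).
Proof.
apply/integrableP; split; first exact/measurable_EFinP.
under eq_integral do rewrite /= ger0_norm //.
by rewrite P_total ltry.
Qed.

Lemma bounded_measurable_bounded f :
  bounded_measurable f -> [bounded f x | x in setT].
Proof.
move=> [_ [B hB]]; exists B; split; first exact: num_real.
by move=> x Bx y _; apply: le_trans (hB y) (ltW Bx).
Qed.

Lemma bounded_measurable_cst c : bounded_measurable (fun _ => c).
Proof. by split => //; exists `|c|. Qed.

Lemma bounded_measurableD f g : bounded_measurable f -> bounded_measurable g ->
  bounded_measurable (fun y => f y + g y).
Proof.
move=> [mf [B hB]] [mg [C hC]]; split; first exact: measurable_funD.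
by exists (B + C) => y; apply: le_trans (ler_normD _ _) _; apply: lerD.
Qed.

Lemma bounded_measurableM f g : bounded_measurable f -> bounded_measurable g ->
  bounded_measurable (fun y => f y * g y).
Proof.
move=> [mf [B hB]] [mg [C hC]]; split; first exact: measurable_funM.
by exists (B * C) => y; rewrite normrM; apply: ler_pM.
Qed.

Lemma bounded_measurableZl c f : bounded_measurable f ->
  bounded_measurable (fun y => c * f y).
Proof. by move=> bf; apply: bounded_measurableM => //; apply: bounded_measurable_cst. Qed.

Lemma bounded_measurableB f g : bounded_measurable f -> bounded_measurable g ->
  bounded_measurable (fun y => f y - g y).
Proof.
move=> bf bg; apply: bounded_measurableD bf _.
by under [X in bounded_measurable X]eq_fun do rewrite -mulN1r; apply: bounded_measurableZl.
Qed.

Lemma bounded_measurableX f j : bounded_measurable f ->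
  bounded_measurable (fun y => f y ^+ j).
Proof.
move=> bf; elim: j => [|j IH].
  by under [X in bounded_measurable X]eq_fun do rewrite expr0; apply: bounded_measurable_cst.
by under [X in bounded_measurable X]eq_fun do rewrite exprS; apply: bounded_measurableM.
Qed.

Lemma bounded_measurable_sum (I : Type) (s : seq I) (Q : pred I) (F : I -> Y -> R) :
  (forall i, bounded_measurable (F i)) ->
  bounded_measurable (fun y => \sum_(i <- s | Q i) F i y).
Proof.
move=> hF; under [X in bounded_measurable X]eq_fun do rewrite -big_filter.
elim: [seq i <- s | Q i] => [|i s' IH].
  by under [X in bounded_measurable X]eq_fun do rewrite big_nil; apply: bounded_measurable_cst.
by under [X in bounded_measurable X]eq_fun do rewrite big_cons; apply: bounded_measurableD.
Qed.

Lemma bounded_measurable_Pintegrable f : bounded_measurable f -> Pintegrable f.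
Proof.
move=> bf; split; first by case: bf.
have := integrableMr measurableT (proj1 bf) (bounded_measurable_bounded bf) integrable_density.
by apply: (eq_integrable measurableT) => y _ /=; rewrite -EFinM mulrC.
Qed.

Lemma PintegrableD f g : Pintegrable f -> Pintegrable g -> Pintegrable (fun y => f y + g y).
Proof.
move=> [mf If] [mg Ig]; split; first exact: measurable_funD.
have := integrableD measurableT If Ig.
by apply: (eq_integrable measurableT) => y _ /=; rewrite -EFinD mulrDr.
Qed.

Lemma PintegrableMl g f : bounded_measurable g -> Pintegrable f ->
  Pintegrable (fun y => g y * f y).
Proof.
move=> bg [mf If]; split; first by apply: measurable_funM => //; case: bg.
have := integrableMr measurableT (proj1 bg) (bounded_measurable_bounded bg) If.
by apply: (eq_integrable measurableT) => y _ /=; rewrite -EFinM mulrCA.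
Qed.

Lemma PintegrableZl c f : Pintegrable f -> Pintegrable (fun y => c * f y).
Proof. by apply: PintegrableMl; apply: bounded_measurable_cst. Qed.

Lemma PintegrableB f g : Pintegrable f -> Pintegrable g -> Pintegrable (fun y => f y - g y).
Proof.
move=> gf gg; apply: PintegrableD gf _.
by under [X in Pintegrable X]eq_fun do rewrite -mulN1r; apply: PintegrableZl.
Qed.

Lemma Pintegrable_sum (I : Type) (s : seq I) (F : I -> Y -> R) :
  (forall i, Pintegrable (F i)) -> Pintegrable (fun y => \sum_(i <- s) F i y).
Proof.
move=> hF; elim: s => [|i s IH].
  under [X in Pintegrable X]eq_fun do rewrite big_nil.
  exact/bounded_measurable_Pintegrable/bounded_measurable_cst.
by under [X in Pintegrable X]eq_fun do rewrite big_cons; apply: PintegrableD.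
Qed.

Lemma Pintegrable_norm f : Pintegrable f -> Pintegrable (fun y => `|f y|).
Proof.
move=> [mf If]; split; first exact: measurableT_comp.
have := integrable_norm If; apply: (eq_integrable measurableT) => y _ /=.
by rewrite normrM ger0_norm.
Qed.

Lemma eq_Ep f g : f =1 g -> E f = E g.
Proof. by move=> h; congr Ep; apply/funext. Qed.

Lemma EpD f g : Pintegrable f -> Pintegrable g -> E (fun y => f y + g y) = E f + E g.
Proof.
move=> [_ If] [_ Ig]; rewrite /Ep -RintegralD //.
by apply: eq_Rintegral => y _; rewrite mulrDr.
Qed.

Lemma EpZl c f : Pintegrable f -> E (fun y => c * f y) = c * E f.
Proof.
move=> [_ If]; rewrite /Ep -RintegralZl //.
by apply: eq_Rintegral => y _; rewrite mulrCA.
Qed.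

Lemma EpZr c f : Pintegrable f -> E (fun y => f y * c) = E f * c.
Proof. by move=> gf; rewrite mulrC -EpZl //; apply: eq_Ep => y; rewrite mulrC. Qed.

Lemma Ep_cst c : E (fun _ => c) = c.
Proof.
rewrite /Ep; under eq_Rintegral do rewrite mulrC.
rewrite RintegralZl //; last exact: integrable_density.
by rewrite /Rintegral P_total /= mulr1.
Qed.

Lemma Ep_sum (I : Type) (s : seq I) (Q : pred I) (F : I -> Y -> R) :
  (forall i, Pintegrable (F i)) ->
  E (fun y => \sum_(i <- s | Q i) F i y) = \sum_(i <- s | Q i) E (F i).
Proof.
move=> hF; under eq_Ep do rewrite -big_filter; rewrite -big_filter.
elim: [seq i <- s | Q i] => [|i s' IH].
  by under eq_Ep do rewrite big_nil; rewrite Ep_cst big_nil.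
under eq_Ep do rewrite big_cons; rewrite EpD //; last exact: Pintegrable_sum.
by rewrite IH big_cons.
Qed.

Lemma ler_Ep_norm f : Pintegrable f -> `|E f| <= E (fun y => `|f y|).
Proof.
move=> [mf If]; rewrite /Ep; apply: le_trans (le_normr_Rintegral measurableT If) _.
apply: le_Rintegral => //.
- exact: integrable_norm If.
- exact: (Pintegrable_norm (conj mf If)).2.
- by move=> y _; rewrite normrM (ger0_norm (P_ge0 y)).
Qed.

Lemma ler_Ep f g : Pintegrable f -> Pintegrable g -> (forall y, f y <= g y) -> E f <= E g.
Proof.
move=> [_ If] [_ Ig] fg; rewrite /Ep; apply: le_Rintegral => // y _.
by rewrite ler_wpM2l.
Qed.

Let muS : {sigma_finite_measure set Y -> \bar R} :=
  HB.pack (mu : set Y -> \bar R) mu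
   (isSFinite.Build _ _ _ mu (sfinite_measure_sigma_finite mu_sigma_finite))
   (isSigmaFinite.Build _ _ _ mu mu_sigma_finite).

Let integral_muS D (f : Y -> \bar R) :
  (\int[muS]_(x in D) f x = \int[mu]_(x in D) f x)%E.
Proof. by []. Qed.

Definition kernel_le1 (h : Y -> Y -> R) :=
  measurable_fun setT (fun p : Y * Y => h p.1 p.2) /\ forall a b, `|h a b| <= 1.

Lemma kernel_le1_row h a : kernel_le1 h -> bounded_measurable (h a).
Proof. by move=> [mh hb]; split; [exact: measurable_fun_pair2 a mh | exists 1]. Qed.

Lemma kernel_le1_col h b : kernel_le1 h -> bounded_measurable (fun a => h a b).
Proof. by move=> [mh hb]; split; [exact: measurable_fun_pair1 b mh | exists 1 => a]. Qed.

Lemma measurable_kernel_density h f : kernel_le1 h -> measurable_fun setT f ->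
  measurable_fun setT (fun p : Y * Y => (P p.2 * (h p.1 p.2 * f p.2))%:E).
Proof.
move=> [mh _] mf; apply/measurable_EFinP; apply: measurable_funM.
  exact: measurableT_comp P_measurable measurable_snd.
by apply: measurable_funM => //; apply: measurableT_comp mf measurable_snd.
Qed.

Lemma bounded_measurable_Ep_kernel h f : kernel_le1 h -> Pintegrable f ->
  bounded_measurable (fun y => E (fun z => h y z * f z)).
Proof.
move=> kh gf; split; last first.
  exists (E (fun y => `|f y|)) => y.
  have ghf := PintegrableMl (kernel_le1_row y kh) gf.
  apply: le_trans (ler_Ep_norm ghf) _.
  apply: ler_Ep; [exact: Pintegrable_norm | exact: Pintegrable_norm |].
  by move=> z; rewrite normrM; apply: ler_piMl => //; apply: kh.2.
pose F := fun p : Y * Y => (P p.2 * (h p.1 p.2 * f p.2))%:E.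
have mF : measurable_fun setT F by apply: measurable_kernel_density => //; case: gf.
(* The partial integral is [fine (fubini_F F^+ - fubini_F F^-)], measurable by Tonelli. *)
have -> : (fun y => E (fun z => h y z * f z)) =
    fine \o (fubini_F muS (F^\+) \- fubini_F muS (F^\-))%E.
  apply/funext => y; rewrite /Ep /Rintegral /= /fubini_F.
  congr fine; rewrite [LHS]integralE !integral_muS.
  by congr (_ - _)%E; apply: eq_integral => x _; rewrite ?funeposE ?funenegE.
apply: measurableT_comp; first exact: fine_measurable.
apply: emeasurable_funB.
  by apply: measurable_fun_fubini_tonelli_F => //; apply: measurable_funepos.
by apply: measurable_fun_fubini_tonelli_F => //; apply: measurable_funeneg.
Qed.

Lemma integral_Ep (c : R) f : Pintegrable f ->
  (\int[mu]_y (c * (P y * f y))%:E = (c * E f)%:E)%E.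
Proof.
move=> [_ If]; under eq_integral do rewrite EFinM.
rewrite integralZl // /Ep /Rintegral EFinM fineK //.
exact: integrable_fin_num If.
Qed.

Lemma integrable_kernel_product h f g : kernel_le1 h -> Pintegrable f -> Pintegrable g ->
  (muS \x muS)%E.-integrable setT
    (fun p : Y * Y => (P p.1 * g p.1 * (P p.2 * (h p.1 p.2 * f p.2)))%:E).
Proof.
move=> kh [mf If] [mg Ig].
set F := fun p : Y * Y => _.
have mPg : measurable_fun setT (fun x => P x * g x) by apply: measurable_funM.
have mPf : measurable_fun setT (fun x => P x * f x) by apply: measurable_funM.
have mF : measurable_fun setT F.
  apply/measurable_EFinP; apply: measurable_funM.
    exact: measurableT_comp mPg measurable_fst.
  by apply/measurable_EFinP; apply: measurable_kernel_density.
apply/(integrable12ltyP muS muS mF).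
pose C := (\int[mu]_y `|(P y * f y)%:E|)%E.
have C0 : (0 <= C)%E by apply: integral_ge0.
(* |F (x, y)| <= |P x g x| * |P y f y|, a product of integrable functions. *)
apply: (@le_lt_trans _ _ (\int[mu]_x (`|(P x * g x)%:E| * C))%E); last first.
  rewrite ge0_integralZr //; last by apply/measurableT_comp/measurable_EFinP.
  rewrite muleC; apply: lte_mul_pinfty => //; last by case/integrableP: Ig.
  by rewrite ge0_fin_numE //; case/integrableP: If.
rewrite integral_muS; apply: ge0_le_integral => //.
- by move=> x _; apply: integral_ge0.
- apply: (measurable_fun_fubini_tonelli_F (abse \o F)); first exact: measurableT_comp.
  by move=> ?; apply: abse_ge0.
- by apply: emeasurable_funM => //; apply/measurableT_comp/measurable_EFinP.
move=> x _; rewrite integral_muS /C -ge0_integralZl //; last first.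
  exact/measurableT_comp/measurable_EFinP.
apply: ge0_le_integral => //.
- by apply: measurableT_comp => //; apply: measurable_fun_pair2 x mF.
- by apply: emeasurable_funM => //; apply/measurableT_comp/measurable_EFinP.
move=> y _; rewrite /F /= -EFinM !normrM lee_fin -!mulrA.
do 3 apply: ler_wpM2l => //.
by rewrite ler_piMl // kh.2.
Qed.

Lemma Ep_kernel_swap h f g : kernel_le1 h -> Pintegrable f -> Pintegrable g ->
  E (fun a => g a * E (fun b => h a b * f b)) = E (fun b => f b * E (fun a => h a b * g a)).
Proof.
move=> kh gf gg; have := Fubini (integrable_kernel_product kh gf gg).
rewrite !integral_muS.
under eq_integral => a _.
  rewrite (integral_Ep (P a * g a) (PintegrableMl (kernel_le1_row a kh) gf)) -mulrA.
  over.
under [X in _ = X -> _]eq_integral => b _.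
  rewrite (eq_integral (fun a => ((P b * f b) * (P a * (h a b * g a)))%:E)); last first.
    by move=> a _; congr EFin; ring.
  rewrite (integral_Ep (P b * f b) (PintegrableMl (kernel_le1_col b kh) gg)) -mulrA.
  over.
by rewrite /Ep /Rintegral => ->.
Qed.

(* [C t m] is a candidate for the expectation of [F (t ++ s)] over m further
   i.i.d. samples s; [iid_recursive C] says that it is compatible with
   conditioning on the next sample. *)
Definition iid_recursive (C : seq Y -> nat -> R) :=
  forall t m, Pintegrable (fun y => C (rcons t y) m) /\
              E (fun y => C (rcons t y) m) = C t m.+1.

Lemma iid_recursiveD a b C1 C2 : iid_recursive C1 -> iid_recursive C2 ->
  iid_recursive (fun t m => a * C1 t m + b * C2 t m).
Proof.
move=> rC1 rC2 t m; have [i1 e1] := rC1 t m; have [i2 e2] := rC2 t m.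
split; first by apply: PintegrableD; apply: PintegrableZl.
by rewrite EpD ?EpZl ?e1 ?e2 //; apply: PintegrableZl.
Qed.

Lemma iidE_recursive (F : seq Y -> R) C : iid_recursive C -> (forall t, C t 0%N = F t) ->
  forall m t, iidE mu P m (fun s => F (t ++ s)) = C t m.
Proof.
move=> rC C0; elim=> [|m IH] t /=; first by rewrite cats0 C0.
rewrite -(rC t m).2; apply: eq_Ep => y; rewrite -IH.
by congr iidE; apply/funext => s; rewrite cat_rcons.
Qed.

Lemma Pintegrable_binomialE m (p : Y -> R) (F : Y -> nat -> R) : bounded_measurable p ->
  (forall c, Pintegrable (F^~ c)) -> Pintegrable (fun y => binomialE m (p y) (F y)).
Proof.
move=> bp; elim: m F => [|m IH] F gF /=; first exact: gF.
apply: PintegrableD; first by apply: PintegrableMl bp _; apply: IH.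
apply: PintegrableMl; last exact: IH.
by apply: bounded_measurableB => //; apply: bounded_measurable_cst.
Qed.

Lemma bounded_measurable_binomialE m (p : Y -> R) (F : Y -> nat -> R) :
  bounded_measurable p -> (forall c, bounded_measurable (F^~ c)) ->
  bounded_measurable (fun y => binomialE m (p y) (F y)).
Proof.
move=> bp; elim: m F => [|m IH] F gF /=; first exact: gF.
apply: bounded_measurableD; first by apply: bounded_measurableM bp _; apply: IH.
apply: bounded_measurableM; last exact: IH.
by apply: bounded_measurableB => //; apply: bounded_measurable_cst.
Qed.

Section Ranks.
Variable r : Y -> R.
Hypothesis r_measurable : measurable_fun setT r.

Definition lt_ind (a b : Y) : R := (((r a < r b)%R : bool) : nat)%:R.

Lemma kernel_le1_lt_ind : kernel_le1 lt_ind.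
Proof.
split; last by move=> a b; rewrite /lt_ind; case: (r a < r b); rewrite ?normr1 ?normr0.
apply: measurable_bool_natr; apply: measurable_fun_ltr.
  exact: measurableT_comp r_measurable measurable_fst.
exact: measurableT_comp r_measurable measurable_snd.
Qed.

Lemma kernel_le1_gt_ind : kernel_le1 (fun a b => lt_ind b a).
Proof.
split; last by move=> a b; rewrite /lt_ind; case: (r b < r a); rewrite ?normr1 ?normr0.
apply: measurable_bool_natr; apply: measurable_fun_ltr.
  exact: measurableT_comp r_measurable measurable_snd.
exact: measurableT_comp r_measurable measurable_fst.
Qed.

Definition Plt (y : Y) : R := E (fun z => lt_ind z y).

Lemma bounded_measurable_Plt : bounded_measurable Plt.
Proof.
have := bounded_measurable_Ep_kernel kernel_le1_gt_ind
  (bounded_measurable_Pintegrable (bounded_measurable_cst 1)).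
by congr bounded_measurable; apply/funext => y; apply: eq_Ep => z; rewrite mulr1.
Qed.

Lemma bounded_measurable_fun_lt x (V : nat -> R) :
  bounded_measurable (fun y => V ((r y < r x)%R : bool)).
Proof.
under [X in bounded_measurable X]eq_fun do rewrite bool_affine mulrC.
apply: bounded_measurableD; first exact: bounded_measurable_cst.
exact/bounded_measurableZl/(kernel_le1_col x kernel_le1_lt_ind).
Qed.

Lemma Ep_fun_lt x (V : nat -> R) :
  E (fun y => V ((r y < r x)%R : bool)) = Plt x * V 1%N + (1 - Plt x) * V 0%N.
Proof.
under eq_Ep do rewrite bool_affine mulrC.
have gx := bounded_measurable_Pintegrable (kernel_le1_col x kernel_le1_lt_ind).
rewrite EpD; last exact: PintegrableZl.
  by rewrite Ep_cst EpZl // /Plt; ring.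
exact/bounded_measurable_Pintegrable/bounded_measurable_cst.
Qed.

Lemma Ep_Ep_fun_lt (W : Y -> nat -> R) : Pintegrable (W^~ 0%N) -> Pintegrable (W^~ 1%N) ->
  bounded_measurable (fun y => E (fun z => W z ((r y < r z)%R : bool))) /\
  E (fun y => E (fun z => W z ((r y < r z)%R : bool))) =
    E (fun z => Plt z * W z 1%N + (1 - Plt z) * W z 0%N).
Proof.
move=> g0 g1; have gD := PintegrableB g1 g0.
have split_lt y : E (fun z => W z ((r y < r z)%R : bool)) =
    E (W^~ 0%N) + E (fun z => lt_ind y z * (W z 1%N - W z 0%N)).
  under eq_Ep do rewrite bool_affine.
  by rewrite EpD //; apply: PintegrableMl gD; apply: kernel_le1_row kernel_le1_lt_ind.
have bP := bounded_measurable_Ep_kernel kernel_le1_lt_ind gD.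
split.
  under [X in bounded_measurable X]eq_fun do rewrite split_lt.
  exact: bounded_measurableD (bounded_measurable_cst _) bP.
under eq_Ep do rewrite split_lt.
rewrite EpD; [|exact/bounded_measurable_Pintegrable/bounded_measurable_cst
              |exact: bounded_measurable_Pintegrable].
(* Fubini: integrating out the fresh sample first produces Plt z. *)
rewrite Ep_cst [X in _ + X = _](eq_Ep
  (g := fun y => 1 * E (fun z => lt_ind y z * (W z 1%N - W z 0%N))));
  last by move=> y; rewrite mul1r.
rewrite (Ep_kernel_swap kernel_le1_lt_ind gD
  (bounded_measurable_Pintegrable (bounded_measurable_cst 1))).
rewrite [RHS](eq_Ep (g := fun z => W z 0%N + Plt z * (W z 1%N - W z 0%N)));
  last by move=> z; ring.
rewrite EpD //; last exact: PintegrableMl bounded_measurable_Plt gD.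
congr (_ + _); apply: eq_Ep => z; rewrite mulrC /Plt; congr (_ * _).
by apply: eq_Ep => y; rewrite mulr1.
Qed.

Lemma below_rcons t x y :
  below r (rcons t x) y = (below r t y + ((r x < r y)%R : nat))%N.
Proof. by rewrite /below -cats1 count_cat /= addn0. Qed.

Lemma below_cons_affine t x y (F : nat -> R) c :
  F (below r (x :: t) y + c)%N =
  F (below r t y + c)%N + lt_ind x y * (F (below r t y + c.+1)%N - F (below r t y + c)%N).
Proof.
rewrite /= (bool_affine (fun b => F (b + below r t y + c)%N)) /lt_ind.
by rewrite !add0n add1n addSn addnS.
Qed.

Lemma Pintegrable_below t (F : Y -> nat -> R) : (forall c, Pintegrable (F^~ c)) ->
  forall c, Pintegrable (fun y => F y (below r t y + c)%N).
Proof.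
elim: t F => [|x t IH] F gF c; first exact: gF.
under [X in Pintegrable X]eq_fun do rewrite below_cons_affine.
apply: PintegrableD (IH _ gF c) _.
apply: PintegrableMl; first exact: kernel_le1_row kernel_le1_lt_ind.
exact: PintegrableB (IH _ gF _) (IH _ gF _).
Qed.

Lemma bounded_measurable_below t (F : Y -> nat -> R) :
  (forall c, bounded_measurable (F^~ c)) ->
  forall c, bounded_measurable (fun y => F y (below r t y + c)%N).
Proof.
elim: t F => [|x t IH] F bF c; first exact: bF.
under [X in bounded_measurable X]eq_fun do rewrite below_cons_affine.
apply: bounded_measurableD (IH _ bF c) _.
apply: bounded_measurableM; first exact: kernel_le1_row kernel_le1_lt_ind.
exact: bounded_measurableB (IH _ bF _) (IH _ bF _).
Qed.

(* The conditional expectation of [psi z (rank of z among all samples)], given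
   the prefix t, b further samples known to lie below z, and m samples still to
   be drawn. *)
Definition binomial_rank (psi : Y -> nat -> R) (t : seq Y) (m : nat) (z : Y) (b : nat) : R :=
  binomialE m (Plt z) (fun c => psi z (below r t z + (b + c))%N).

Lemma binomial_rank_rcons psi t y m z b :
  binomial_rank psi (rcons t y) m z b = binomial_rank psi t m z (((r y < r z)%R : nat) + b)%N.
Proof. by apply: eq_binomialE => c; rewrite below_rcons !addnA. Qed.

Lemma Pintegrable_binomial_rank psi t m b : (forall c, Pintegrable (psi^~ c)) ->
  Pintegrable (fun z => binomial_rank psi t m z b).
Proof.
move=> gp; apply: Pintegrable_binomialE; first exact: bounded_measurable_Plt.
by move=> c; apply: (Pintegrable_below t (F := psi) gp (b + c)%N).
Qed.

Lemma bounded_measurable_binomial_rank psi t m b :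
  (forall c, bounded_measurable (psi^~ c)) ->
  bounded_measurable (fun z => binomial_rank psi t m z b).
Proof.
move=> bp; apply: bounded_measurable_binomialE; first exact: bounded_measurable_Plt.
by move=> c; apply: (bounded_measurable_below t (F := psi) bp (b + c)%N).
Qed.

Lemma binomial_rankS psi t m z :
  Plt z * binomial_rank psi t m z 1%N + (1 - Plt z) * binomial_rank psi t m z 0%N =
  binomial_rank psi t m.+1 z 0%N.
Proof.
by rewrite /binomial_rank /=; congr (_ * _ + _ * _); apply: eq_binomialE => c;
  rewrite ?add1n ?add0n.
Qed.

Lemma Ep_binomial_rank_lt psi t m x :
  E (fun y => binomial_rank psi t m x ((r y < r x)%R : bool)) = binomial_rank psi t m.+1 x 0%N.
Proof. by rewrite (Ep_fun_lt x (binomial_rank psi t m x)) binomial_rankS. Qed.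

Lemma Ep_Ep_binomial_rank psi t m (g : Y -> R) : bounded_measurable g ->
  (forall c, Pintegrable (psi^~ c)) ->
  bounded_measurable
    (fun y => E (fun z => g z * binomial_rank psi t m z ((r y < r z)%R : bool))) /\
  E (fun y => E (fun z => g z * binomial_rank psi t m z ((r y < r z)%R : bool))) =
  E (fun z => g z * binomial_rank psi t m.+1 z 0%N).
Proof.
move=> bg gp.
have gW b : Pintegrable (fun z => g z * binomial_rank psi t m z b).
  exact: PintegrableMl bg (Pintegrable_binomial_rank _ _ _ gp).
have [bE eE] :=
  Ep_Ep_fun_lt (W := fun z b => g z * binomial_rank psi t m z b) (gW 0%N) (gW 1%N).
split => //; rewrite eE; apply: eq_Ep => z /=; rewrite -binomial_rankS; ring.
Qed.

Lemma big_rcons_lt (F : Y -> R) t y x :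
  \sum_(y' <- rcons t y | (r y' < r x)%R) F y' =
  \sum_(y' <- t | (r y' < r x)%R) F y' + lt_ind y x * F y.
Proof.
rewrite big_rcons /lt_ind; case: (r y < r x)%R => /=; first by rewrite mul1r.
by rewrite mul0r addr0.
Qed.

Section RankSum.
Variable phi : Y -> nat -> R.
Hypothesis phi_integrable : forall c, Pintegrable (phi^~ c).

Definition rank_sum (u : seq Y) : R := \sum_(x <- u) phi x (below r u x).

Definition rank_sum_iid (t : seq Y) (m : nat) : R :=
  \sum_(x <- t) binomial_rank phi t m x 0%N +
  m%:R * E (fun z => binomial_rank phi t m.-1 z 0%N).

Lemma rank_sum_iid0 t : rank_sum_iid t 0%N = rank_sum t.
Proof.
by rewrite /rank_sum_iid mul0r addr0; apply: eq_bigr => x _; rewrite /binomial_rank /= !addn0.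
Qed.

Lemma Ep_sum_binomial_rank_rcons t m :
  Pintegrable (fun y => \sum_(x <- rcons t y) binomial_rank phi (rcons t y) m x 0%N) /\
  E (fun y => \sum_(x <- rcons t y) binomial_rank phi (rcons t y) m x 0%N) =
  \sum_(x <- t) binomial_rank phi t m.+1 x 0%N + E (fun z => binomial_rank phi t m z 0%N).
Proof.
have rcons_split y : \sum_(x <- rcons t y) binomial_rank phi (rcons t y) m x 0%N =
    \sum_(x <- t) binomial_rank phi t m x ((r y < r x)%R : bool) +
    binomial_rank phi t m y 0%N.
  rewrite big_rcons /= binomial_rank_rcons ltxx; congr (_ + _).
  by apply: eq_bigr => x _; rewrite binomial_rank_rcons addn0.
have bS : bounded_measurable
    (fun y => \sum_(x <- t) binomial_rank phi t m x ((r y < r x)%R : bool)).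
  by apply: bounded_measurable_sum => x; apply: bounded_measurable_fun_lt.
have gB := Pintegrable_binomial_rank t m 0 phi_integrable.
under [X in Pintegrable X /\ _]eq_fun do rewrite rcons_split.
under eq_Ep do rewrite rcons_split.
split; first exact: PintegrableD (bounded_measurable_Pintegrable bS) gB.
rewrite EpD // ?Ep_sum; last exact: bounded_measurable_Pintegrable.
  by congr (_ + _); apply: eq_bigr => x _; rewrite Ep_binomial_rank_lt.
by move=> x; apply/bounded_measurable_Pintegrable/bounded_measurable_fun_lt.
Qed.

Lemma Ep_Ep_binomial_rank_rcons t m :
  bounded_measurable (fun y => E (fun z => binomial_rank phi (rcons t y) m z 0%N)) /\
  E (fun y => E (fun z => binomial_rank phi (rcons t y) m z 0%N)) =
  E (fun z => binomial_rank phi t m.+1 z 0%N).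
Proof.
have e y : E (fun z => binomial_rank phi (rcons t y) m z 0%N) =
    E (fun z => 1 * binomial_rank phi t m z ((r y < r z)%R : bool)).
  by apply: eq_Ep => z; rewrite binomial_rank_rcons addn0 mul1r.
have [bE eE] := Ep_Ep_binomial_rank t m (bounded_measurable_cst 1) phi_integrable.
under [X in bounded_measurable X /\ _]eq_fun do rewrite e.
under eq_Ep do rewrite e.
by split => //; rewrite eE; apply: eq_Ep => z; rewrite mul1r.
Qed.

Lemma iid_recursive_rank_sum : iid_recursive rank_sum_iid.
Proof.
move=> t m; rewrite /rank_sum_iid.
have [gS eS] := Ep_sum_binomial_rank_rcons t m.
have [bT eT] := Ep_Ep_binomial_rank_rcons t m.-1.
have gT := bounded_measurable_Pintegrable bT.
split; first exact: PintegrableD gS (PintegrableZl _ gT).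
rewrite EpD ?EpZl ?eS ?eT //; last exact: PintegrableZl.
by case: m {gS eS bT eT gT} => [|m] /=; rewrite ?mul0r ?addr0 // -natr1; ring.
Qed.

End RankSum.

Section PairRankSum.
Variables (psi : Y -> nat -> R) (chi : Y -> R).
Hypothesis psi_bounded : forall c, bounded_measurable (psi^~ c).
Hypothesis chi_integrable : Pintegrable chi.

Let psi_integrable c : Pintegrable (psi^~ c).
Proof. exact: bounded_measurable_Pintegrable. Qed.

Definition pair_rank_sum (u : seq Y) : R :=
  \sum_(x <- u) (\sum_(y <- u | (r y < r x)%R) psi y (below r u y)) * chi x.

Definition Ep_above (w : Y) : R := E (fun z => lt_ind w z * chi z).

Lemma bounded_measurable_Ep_above : bounded_measurable Ep_above.
Proof. exact: bounded_measurable_Ep_kernel kernel_le1_lt_ind chi_integrable. Qed.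

(* Contributions of the pairs y < x with both in the prefix, only x in it,
   only y in it, or neither; m (resp. m (m - 1)) choices of fresh samples. *)
Definition pairs_prefix (t : seq Y) (m : nat) : R :=
  \sum_(x <- t) (\sum_(y <- t | (r y < r x)%R) binomial_rank psi t m y 0%N) * chi x.

Definition pairs_fresh_lower (t : seq Y) (m : nat) : R :=
  \sum_(x <- t) E (fun z => lt_ind z x * binomial_rank psi t m z 0%N) * chi x.

Definition pairs_fresh_upper (t : seq Y) (m : nat) : R :=
  \sum_(y <- t) binomial_rank psi t m y 0%N * Ep_above y.

Definition pairs_fresh (t : seq Y) (m : nat) : R :=
  E (fun w => Ep_above w * binomial_rank psi t m w 0%N).

Definition pair_rank_sum_iid (t : seq Y) (m : nat) : R :=
  pairs_prefix t m + m%:R * pairs_fresh_lower t m.-1 + m%:R * pairs_fresh_upper t m.-1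
  + (m * m.-1)%:R * pairs_fresh t m.-2.

Lemma pair_rank_sum_iid0 t : pair_rank_sum_iid t 0%N = pair_rank_sum t.
Proof.
rewrite /pair_rank_sum_iid !mul0r !addr0; apply: eq_bigr => x _; congr (_ * _).
by apply: eq_bigr => y _; rewrite /binomial_rank /= !addn0.
Qed.

Lemma pairs_prefix_rcons t m y : pairs_prefix (rcons t y) m =
  \sum_(x <- t) (\sum_(y' <- t | (r y' < r x)%R)
                   binomial_rank psi t m y' ((r y < r y')%R : bool)) * chi x
  + \sum_(x <- t) lt_ind y x * binomial_rank psi t m y 0%N * chi x
  + \sum_(y' <- t) lt_ind y' y * binomial_rank psi t m y' 0%N * chi y.
Proof.
rewrite /pairs_prefix big_rcons /= big_rcons_lt (_ : lt_ind y y = 0) ?mul0r ?addr0;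
  last by rewrite /lt_ind ltxx.
under eq_bigr do rewrite big_rcons_lt mulrDl.
rewrite big_split /=; congr (_ + _ + _).
- apply: eq_bigr => x _; congr (_ * _); apply: eq_bigr => y' _.
  by rewrite binomial_rank_rcons addn0.
- by apply: eq_bigr => x _; rewrite binomial_rank_rcons ltxx.
- rewrite big_distrl /= big_mkcond /=; apply: eq_bigr => y' _.
  rewrite /lt_ind binomial_rank_rcons.
  by case: (ltgtP (r y') (r y)) => _ /=; rewrite ?mul1r ?mul0r.
Qed.

Lemma Ep_pairs_prefix_rcons t m :
  Pintegrable (fun y => pairs_prefix (rcons t y) m) /\
  E (fun y => pairs_prefix (rcons t y) m) =
  pairs_prefix t m.+1 + pairs_fresh_lower t m + pairs_fresh_upper t m.
Proof.
pose a1 y := \sum_(x <- t)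
  (\sum_(y' <- t | (r y' < r x)%R) binomial_rank psi t m y' ((r y < r y')%R : bool)) * chi x.
pose a2 y := \sum_(x <- t) lt_ind y x * binomial_rank psi t m y 0%N * chi x.
pose a3 y := \sum_(y' <- t) lt_ind y' y * binomial_rank psi t m y' 0%N * chi y.
have rcons_split y : pairs_prefix (rcons t y) m = a1 y + a2 y + a3 y.
  exact: pairs_prefix_rcons.
have bsum x : bounded_measurable (fun y =>
    \sum_(y' <- t | (r y' < r x)%R) binomial_rank psi t m y' ((r y < r y')%R : bool)).
  by apply: bounded_measurable_sum => y'; apply: bounded_measurable_fun_lt.
have bterm2 x : bounded_measurable (fun y => lt_ind y x * binomial_rank psi t m y 0%N).
  apply: bounded_measurableM; first exact: kernel_le1_col kernel_le1_lt_ind.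
  exact: bounded_measurable_binomial_rank.
have gterm1 x : Pintegrable (fun y => (\sum_(y' <- t | (r y' < r x)%R)
    binomial_rank psi t m y' ((r y < r y')%R : bool)) * chi x).
  apply: bounded_measurable_Pintegrable.
  exact: bounded_measurableM (bsum x) (bounded_measurable_cst _).
have gterm2 x : Pintegrable (fun y => lt_ind y x * binomial_rank psi t m y 0%N * chi x).
  apply: bounded_measurable_Pintegrable.
  exact: bounded_measurableM (bterm2 x) (bounded_measurable_cst _).
have gterm3 y' : Pintegrable (fun y => lt_ind y' y * binomial_rank psi t m y' 0%N * chi y).
  apply: PintegrableMl chi_integrable; apply: bounded_measurableM (bounded_measurable_cst _).
  exact: kernel_le1_row kernel_le1_lt_ind.
have ga1 : Pintegrable a1 := Pintegrable_sum t gterm1.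
have ga2 : Pintegrable a2 := Pintegrable_sum t gterm2.
have ga3 : Pintegrable a3 := Pintegrable_sum t gterm3.
have Ea1 : E a1 = pairs_prefix t m.+1.
  rewrite Ep_sum //; apply: eq_bigr => x _.
  rewrite EpZr ?Ep_sum; last exact: bounded_measurable_Pintegrable.
    by congr (_ * _); apply: eq_bigr => y' _; rewrite Ep_binomial_rank_lt.
  by move=> y'; apply/bounded_measurable_Pintegrable/bounded_measurable_fun_lt.
have Ea2 : E a2 = pairs_fresh_lower t m.
  rewrite Ep_sum //; apply: eq_bigr => x _.
  by rewrite EpZr //; apply: bounded_measurable_Pintegrable.
have Ea3 : E a3 = pairs_fresh_upper t m.
  rewrite Ep_sum //; apply: eq_bigr => y' _; rewrite /Ep_above -EpZl; last first.
    exact: PintegrableMl (kernel_le1_row _ kernel_le1_lt_ind) chi_integrable.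
  by apply: eq_Ep => y; ring.
under [X in Pintegrable X /\ _]eq_fun do rewrite rcons_split.
under eq_Ep do rewrite rcons_split.
split; first by apply: PintegrableD ga3; apply: PintegrableD.
by rewrite !EpD //; [rewrite Ea1 Ea2 Ea3 | apply: PintegrableD].
Qed.

Lemma Ep_pairs_fresh_lower_rcons t m :
  Pintegrable (fun y => pairs_fresh_lower (rcons t y) m) /\
  E (fun y => pairs_fresh_lower (rcons t y) m) = pairs_fresh_lower t m.+1 + pairs_fresh t m.
Proof.
have hsw x := Ep_Ep_binomial_rank t m (kernel_le1_col x kernel_le1_lt_ind) psi_integrable.
pose b1 y := \sum_(x <- t)
  E (fun z => lt_ind z x * binomial_rank psi t m z ((r y < r z)%R : bool)) * chi x.
pose b2 y := E (fun z => lt_ind z y * binomial_rank psi t m z 0%N) * chi y.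
have rcons_split y : pairs_fresh_lower (rcons t y) m = b1 y + b2 y.
  rewrite /pairs_fresh_lower big_rcons /=; congr (_ + _ * _); last first.
    apply: eq_Ep => z; rewrite binomial_rank_rcons /lt_ind.
    by case: (ltgtP (r z) (r y)) => //= _; rewrite ?mul0r.
  apply: eq_bigr => x _; congr (_ * _); apply: eq_Ep => z.
  by rewrite binomial_rank_rcons addn0.
have bb1 : bounded_measurable b1.
  apply: bounded_measurable_sum => x; apply: bounded_measurableM (bounded_measurable_cst _).
  exact: (hsw x).1.
have gb2 : Pintegrable b2.
  apply: PintegrableMl chi_integrable.
  exact: bounded_measurable_Ep_kernel kernel_le1_gt_ind
    (Pintegrable_binomial_rank _ _ _ psi_integrable).
under [X in Pintegrable X /\ _]eq_fun do rewrite rcons_split.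
under eq_Ep do rewrite rcons_split.
split; first exact: PintegrableD (bounded_measurable_Pintegrable bb1) gb2.
rewrite EpD //; last exact: bounded_measurable_Pintegrable.
congr (_ + _).
  rewrite Ep_sum; last first.
    move=> x; apply: bounded_measurable_Pintegrable.
    exact: bounded_measurableM (hsw x).1 (bounded_measurable_cst _).
  apply: eq_bigr => x _; rewrite EpZr ?(hsw x).2 //.
  exact/bounded_measurable_Pintegrable/(hsw x).1.
rewrite /b2 [LHS](eq_Ep (g := fun y => chi y *
    E (fun z => (fun a b => lt_ind b a) y z * binomial_rank psi t m z 0%N)));
  last by move=> y; rewrite mulrC.
rewrite (Ep_kernel_swap kernel_le1_gt_ind
  (Pintegrable_binomial_rank _ _ _ psi_integrable) chi_integrable).
by apply: eq_Ep => z /=; rewrite mulrC.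
Qed.

Lemma Ep_pairs_fresh_upper_rcons t m :
  Pintegrable (fun y => pairs_fresh_upper (rcons t y) m) /\
  E (fun y => pairs_fresh_upper (rcons t y) m) = pairs_fresh_upper t m.+1 + pairs_fresh t m.
Proof.
pose c1 y := \sum_(y' <- t) binomial_rank psi t m y' ((r y < r y')%R : bool) * Ep_above y'.
pose c2 y := binomial_rank psi t m y 0%N * Ep_above y.
have rcons_split y : pairs_fresh_upper (rcons t y) m = c1 y + c2 y.
  rewrite /pairs_fresh_upper big_rcons /= binomial_rank_rcons ltxx; congr (_ + _).
  by apply: eq_bigr => x _; rewrite binomial_rank_rcons addn0.
have bc1 : bounded_measurable c1.
  apply: bounded_measurable_sum => y'.
  exact: bounded_measurableM (bounded_measurable_fun_lt _ _) (bounded_measurable_cst _).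
have bc2 : bounded_measurable c2.
  exact: bounded_measurableM (bounded_measurable_binomial_rank _ _ _ _)
    bounded_measurable_Ep_above.
under [X in Pintegrable X /\ _]eq_fun do rewrite rcons_split.
under eq_Ep do rewrite rcons_split.
split; first exact/bounded_measurable_Pintegrable/bounded_measurableD.
rewrite EpD; [|exact: bounded_measurable_Pintegrable..].
congr (_ + _); last by apply: eq_Ep => z; rewrite /c2 mulrC.
rewrite Ep_sum; last first.
  move=> y'; apply: bounded_measurable_Pintegrable.
  exact: bounded_measurableM (bounded_measurable_fun_lt _ _) (bounded_measurable_cst _).
apply: eq_bigr => y' _; rewrite EpZr ?Ep_binomial_rank_lt //.
exact/bounded_measurable_Pintegrable/bounded_measurable_fun_lt.
Qed.

Lemma Ep_pairs_fresh_rcons t m :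
  Pintegrable (fun y => pairs_fresh (rcons t y) m) /\
  E (fun y => pairs_fresh (rcons t y) m) = pairs_fresh t m.+1.
Proof.
have e y : pairs_fresh (rcons t y) m =
    E (fun w => Ep_above w * binomial_rank psi t m w ((r y < r w)%R : bool)).
  by apply: eq_Ep => w; rewrite binomial_rank_rcons addn0.
have [bE eE] := Ep_Ep_binomial_rank t m bounded_measurable_Ep_above psi_integrable.
under [X in Pintegrable X /\ _]eq_fun do rewrite e.
under eq_Ep do rewrite e.
by split; [exact: bounded_measurable_Pintegrable|].
Qed.

Lemma iid_recursive_pair_rank_sum : iid_recursive pair_rank_sum_iid.
Proof.
move=> t m; rewrite /pair_rank_sum_iid.
have [g0 e0] := Ep_pairs_prefix_rcons t m.
have [g1 e1] := Ep_pairs_fresh_lower_rcons t m.-1.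
have [g2 e2] := Ep_pairs_fresh_upper_rcons t m.-1.
have [g3 e3] := Ep_pairs_fresh_rcons t m.-2.
split; first by repeat apply: PintegrableD => //; apply: PintegrableZl.
rewrite !EpD ?EpZl ?e0 ?e1 ?e2 ?e3 //; try by repeat apply: PintegrableD => //;
  apply: PintegrableZl.
by case: m {g0 e0 g1 e1 g2 e2 g3 e3} => [|[|m]] /=; rewrite ?mul0r ?addr0 //; ring.
Qed.

End PairRankSum.

Lemma binomial_rank_nil psi m z :
  binomial_rank psi [::] m z 0%N = binomialE m (Plt z) (psi z).
Proof. by apply: eq_binomialE. Qed.

Section Estimator.
Hypothesis no_atom : forall v : R, (\int[mu]_(y in [set y | r y = v]) (P y)%:E = 0)%E.
Hypothesis r_bounded : exists B, forall y, `|r y| <= B.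
Variables (sc : Y -> R) (n k : nat).
Hypothesis sc_integrable : Pintegrable sc.
Hypotheses (k_ge2 : (2 <= k)%N) (k_le_n : (k <= n)%N).

Lemma Ep_eq_reward y : E (fun z => ((r z == r y : bool) : nat)%:R) = 0.
Proof.
rewrite /Ep /Rintegral -[RHS]/(fine 0%E) -(no_atom (r y)).
congr fine; rewrite [RHS]integral_mkcond; apply: eq_integral => z _; rewrite patchE.
case: (eqVneq (r z) (r y)) => [e|ne]; first by rewrite mem_set //= mulr1.
by rewrite mulr0 memNset //= => e; rewrite e eqxx in ne.
Qed.

Lemma Ple_Plt : Ple mu P r =1 Plt.
Proof.
move=> y; rewrite /Ple (eq_Ep (g := fun z => lt_ind z y + ((r z == r y : bool) : nat)%:R)).
  rewrite EpD ?Ep_eq_reward ?addr0 //.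
    exact: bounded_measurable_Pintegrable (kernel_le1_col y kernel_le1_lt_ind).
  apply: bounded_measurable_Pintegrable; split.
    by apply: measurable_bool_natr; apply: measurable_fun_eqr.
  by exists 1 => z; case: (r z == r y); rewrite ?normr1 ?normr0.
by move=> z; rewrite /lt_ind; case: (ltgtP (r z) (r y)) => /=; rewrite ?addr0 ?add0r.
Qed.

Let r_bounded_measurable : bounded_measurable r. Proof. by []. Qed.

Let reward_Plt_bounded j : bounded_measurable (fun w => r w * Plt w ^+ j).
Proof.
exact: bounded_measurableM r_bounded_measurable (bounded_measurableX _ bounded_measurable_Plt).
Qed.

Lemma gfun_Plt y : gfun mu P r k y = E (fun a => lt_ind a y * (r a * Plt a ^+ (k - 2))).
Proof. by apply: eq_Ep => a; rewrite Ple_Plt /lt_ind; ring. Qed.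

Let gfun_bounded : bounded_measurable (gfun mu P r k).
Proof.
have := bounded_measurable_Ep_kernel kernel_le1_gt_ind
  (bounded_measurable_Pintegrable (reward_Plt_bounded (k - 2))).
by congr bounded_measurable; apply/funext => y; rewrite gfun_Plt.
Qed.

Definition term1_weight (z : Y) (c : nat) : R :=
  n%:R^-1 * (r z * ('C(c, k - 1))%:R / ('C(n - 1, k - 1))%:R * sc z).

Definition term2_weight (z : Y) (c : nat) : R :=
  n%:R^-1 * ((k - 1)%:R / (n - 1)%:R) * (r z * ('C(c, k - 2))%:R / ('C(n - 2, k - 2))%:R).

Let term1_weight_integrable c : Pintegrable (term1_weight^~ c).
Proof.
rewrite /term1_weight; under [X in Pintegrable X]eq_fun do rewrite mulrA.
apply: PintegrableMl sc_integrable; apply: bounded_measurableZl.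
by under [X in bounded_measurable X]eq_fun do rewrite -mulrA;
  apply: bounded_measurableM r_bounded_measurable (bounded_measurable_cst _).
Qed.

Let term2_weight_bounded c : bounded_measurable (term2_weight^~ c).
Proof.
rewrite /term2_weight; apply: bounded_measurableZl.
by under [X in bounded_measurable X]eq_fun do rewrite -mulrA;
  apply: bounded_measurableM r_bounded_measurable (bounded_measurable_cst _).
Qed.

Lemma term1_rank_sum : term1 r sc n k =1 rank_sum term1_weight.
Proof. by move=> s; rewrite /term1 /rank_sum big_distrr. Qed.

Lemma term2_pair_rank_sum : term2 r sc n k =1 pair_rank_sum term2_weight sc.
Proof.
move=> s; rewrite /term2 /pair_rank_sum big_distrr; apply: eq_bigr => x _ /=.
by rewrite /term2_weight -big_distrr /=; ring.
Qed.

Lemma Ghat_rank_sums s : Ghat r sc n k s =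
  k%:R * rank_sum term1_weight s + (- k%:R) * pair_rank_sum term2_weight sc s.
Proof.
rewrite -term1_rank_sum -term2_pair_rank_sum /Ghat /term1 /term2.
under eq_bigr do rewrite mulrBl.
by rewrite sumrB; ring.
Qed.

Let n_neq0 : (n%:R : R) != 0.
Proof. by rewrite pnatr_eq0 -lt0n (leq_trans _ k_le_n) // (leq_trans _ k_ge2). Qed.

Let n1_neq0 : ((n - 1)%:R : R) != 0.
Proof. by rewrite pnatr_eq0 subn_eq0 -ltnNge (leq_trans _ k_le_n). Qed.

Let bin1_neq0 : (('C(n - 1, k - 1))%:R : R) != 0.
Proof. by rewrite pnatr_eq0 -lt0n bin_gt0 leq_sub2r. Qed.

Let bin2_neq0 : (('C(n - 2, k - 2))%:R : R) != 0.
Proof. by rewrite pnatr_eq0 -lt0n bin_gt0 leq_sub2r. Qed.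

Lemma rank_sum_iid_term1 :
  rank_sum_iid term1_weight [::] n = E (fun y => r y * Ple mu P r y ^+ (k - 1) * sc y).
Proof.
rewrite /rank_sum_iid big_nil add0r -EpZl;
  last exact: Pintegrable_binomial_rank _ _ _ term1_weight_integrable.
apply: eq_Ep => z; rewrite binomial_rank_nil Ple_Plt.
rewrite (@eq_binomialE _ _ _ _ (fun c => (n%:R^-1 * (r z / ('C(n - 1, k - 1))%:R * sc z)) *
  ('C(c, k - 1))%:R)); last by move=> c; rewrite /term1_weight; ring.
rewrite binomialEZ binomialE_bin -subn1.
by field; rewrite n_neq0 bin1_neq0.
Qed.

Lemma pair_rank_sum_iid_term2 :
  pair_rank_sum_iid term2_weight sc [::] n = E (fun y => (k - 1)%:R * gfun mu P r k y * sc y).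
Proof.
rewrite /pair_rank_sum_iid /pairs_prefix /pairs_fresh_lower /pairs_fresh_upper.
rewrite !big_nil !mulr0 !add0r /pairs_fresh.
rewrite (eq_Ep (g := fun w => (n%:R^-1 * ((k - 1)%:R / (n - 1)%:R)) *
    ((r w * Plt w ^+ (k - 2)) * Ep_above sc w))); last first.
  move=> w; rewrite binomial_rank_nil.
  rewrite (@eq_binomialE _ _ _ _ (fun c => (n%:R^-1 * ((k - 1)%:R / (n - 1)%:R) *
      (r w / ('C(n - 2, k - 2))%:R)) * ('C(c, k - 2))%:R)); last first.
    by move=> c; rewrite /term2_weight; ring.
  rewrite binomialEZ binomialE_bin -subn2.
  by field; rewrite bin2_neq0 n1_neq0 n_neq0.
rewrite EpZl; last exact: PintegrableMl (reward_Plt_bounded _)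
  (bounded_measurable_Pintegrable (bounded_measurable_Ep_above _)).
(* Fubini turns E_w[r w Plt w^(k-2) E_z[1{r w < r z} sc z]] into E_z[g z sc z]. *)
rewrite /Ep_above (Ep_kernel_swap kernel_le1_lt_ind sc_integrable
  (bounded_measurable_Pintegrable (reward_Plt_bounded (k - 2)))).
rewrite [RHS](eq_Ep (g := fun y => (k - 1)%:R * (gfun mu P r k y * sc y)));
  last by move=> y; rewrite mulrA.
rewrite EpZl; last exact: PintegrableMl gfun_bounded sc_integrable.
rewrite mulrA (_ : (n * n.-1)%:R * _ = (k - 1)%:R); last first.
  by rewrite natrM -subn1; field; rewrite n_neq0 n1_neq0.
congr (_ * _); apply: eq_Ep => y; rewrite gfun_Plt mulrC.
by congr (_ * _); apply: eq_Ep => a; ring.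
Qed.

Lemma iidE_term1 :
  iidE mu P n (term1 r sc n k) = E (fun y => r y * Ple mu P r y ^+ (k - 1) * sc y).
Proof.
rewrite -rank_sum_iid_term1 -(iidE_recursive (iid_recursive_rank_sum term1_weight_integrable)
  (rank_sum_iid0 _) n [::]).
by congr iidE; apply/funext => s; rewrite term1_rank_sum.
Qed.

Lemma iidE_term2 :
  iidE mu P n (term2 r sc n k) = E (fun y => (k - 1)%:R * gfun mu P r k y * sc y).
Proof.
rewrite -pair_rank_sum_iid_term2 -(iidE_recursive
  (iid_recursive_pair_rank_sum term2_weight_bounded sc_integrable)
  (pair_rank_sum_iid0 _ _) n [::]).
by congr iidE; apply/funext => s; rewrite term2_pair_rank_sum.
Qed.

Lemma iidE_Ghat : iidE mu P n (Ghat r sc n k) = k%:R * E (fun y =>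
  (r y * Ple mu P r y ^+ (k - 1) - (k - 1)%:R * gfun mu P r k y) * sc y).
Proof.
have rC := iid_recursiveD k%:R (- k%:R) (iid_recursive_rank_sum term1_weight_integrable)
  (iid_recursive_pair_rank_sum term2_weight_bounded sc_integrable).
have C0 t : k%:R * rank_sum_iid term1_weight t 0 +
    (- k%:R) * pair_rank_sum_iid term2_weight sc t 0
    = k%:R * rank_sum term1_weight t + (- k%:R) * pair_rank_sum term2_weight sc t.
  by rewrite rank_sum_iid0 pair_rank_sum_iid0.
have -> : iidE mu P n (Ghat r sc n k) = k%:R * rank_sum_iid term1_weight [::] n +
    (- k%:R) * pair_rank_sum_iid term2_weight sc [::] n.
  rewrite -(iidE_recursive rC C0 n [::]).
  by congr iidE; apply/funext => s; rewrite Ghat_rank_sums.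
rewrite rank_sum_iid_term1 pair_rank_sum_iid_term2.
have gA : Pintegrable (fun y => r y * Ple mu P r y ^+ (k - 1) * sc y).
  by apply: PintegrableMl sc_integrable; under eq_fun do rewrite Ple_Plt.
have gB : Pintegrable (fun y => (k - 1)%:R * gfun mu P r k y * sc y).
  exact/PintegrableMl/sc_integrable/bounded_measurableZl.
rewrite [in RHS](eq_Ep (g := fun y => r y * Ple mu P r y ^+ (k - 1) * sc y +
  - 1 * ((k - 1)%:R * gfun mu P r k y * sc y))); last by move=> y; ring.
by rewrite EpD ?EpZl //; [ring | apply: PintegrableZl].
Qed.

End Estimator.
End Ranks.
End Density.

Theorem mainTheorem2 (R : realType) (d : measure_display) (Y : measurableType d)
  (mu : {measure set Y -> \bar R}) (m : nat)
  (pi : 'rV[R]_m -> Y -> R) (theta : 'rV[R]_m) (rew : Y -> R) (n k : nat) :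
  sigma_finite setT mu ->
  (forall t y, 0 <= pi t y) ->
  (forall t, measurable_fun setT (pi t)) ->
  (forall t, (\int[mu]_(y in setT) (pi t y)%:E = 1)%E) ->
  (forall t y, differentiable (fun t' => pi t' y) t) ->
  measurable_fun setT rew ->
  (exists M : R, forall y, `|rew y| <= M) ->
  (forall j, measurable_fun setT (score pi theta j)) ->
  (forall j, mu.-integrable setT (fun y => (pi theta y * score pi theta j y)%:E)) ->
  (forall r : R, (\int[mu]_(y in [set y | rew y = r]) (pi theta y)%:E = 0)%E) ->
  (2 <= k)%N -> (k <= n)%N ->
  forall j : 'I_m,
    iidE mu (pi theta) n (term1 rew (score pi theta j) n k)
      = Ep mu (pi theta) (fun y =>
          rew y * Ple mu (pi theta) rew y ^+ (k - 1) * score pi theta j y)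
 /\ iidE mu (pi theta) n (term2 rew (score pi theta j) n k)
      = Ep mu (pi theta) (fun y =>
          (k - 1)%:R * gfun mu (pi theta) rew k y * score pi theta j y)
 /\ iidE mu (pi theta) n (Ghat rew (score pi theta j) n k)
      = k%:R * Ep mu (pi theta) (fun y =>
          (rew y * Ple mu (pi theta) rew y ^+ (k - 1)
           - (k - 1)%:R * gfun mu (pi theta) rew k y) * score pi theta j y).
Proof.
(* Differentiability only gives the score its meaning; the identities hold for
   any integrable function in its place. *)
move=> mu_sf pi_ge0 pi_meas pi_total _ rew_meas rew_bounded sc_meas sc_int no_atom
  k_ge2 k_le_n j.
have := (pi_ge0 theta, pi_meas theta, pi_total theta) => -[[P_ge0 P_meas] P_total].
have sc_integrable : Pintegrable mu (pi theta) (score pi theta j).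
  exact: conj (sc_meas j) (sc_int j).
by split; [|split]; [apply: iidE_term1 | apply: iidE_term2 | apply: iidE_Ghat].
Qed.
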